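(* Let $\Omega\subsetneq\mathbb{S}^m$ be a domain and $\rho\in C^1(\Omega)$ such that the metric $g=e^{2\rho}g_0$ is a complete Riemannian metric on $\Omega$ and $\sigma=e^{-\rho}$ is the restriction to $\Omega$ of a continuous function defined on $\overline{\Omega}$. Then the associated map $\phi:\Omega\to\mathbb{H}^{m+1}$ is proper.
   Context: $\mathbb{S}^m\subset\mathbb{R}^{m+1}$ is the unit sphere with round metric $g_0$; $\nabla$ and $|\cdot|$ denote gradient and norm with respect to $g_0$. Let $\mathbb{L}^{m+2}$ be $\mathbb{R}^{m+2}$ with $\langle\!\langle x,y\rangle\!\rangle=-x_0y_0+\sum_{i=1}^{m+1}x_iy_i$, and $\mathbb{H}^{m+1}=\{x:\langle\!\langle x,x\rangle\!\rangle=-1,\ x_0>0\}$. For $\rho\in C^1(\Omega)$ the associated map $\phi=\phi^\rho:\Omega\to\mathbb{H}^{m+1}$ is $$\phi(x)=\frac{e^{\rho(x)}}{2}\Big(1+e^{-2\rho(x)}\big(1+|\nabla\rho(x)|^2\big)\Big)(1,x)+e^{-\rho(x)}\big(0,-x+\nabla\rho(x)\big).$$ Proper means preimages of compact sets are compact. *)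

From Stdlib Require Import Reals List.
Open Scope R_scope.

(* Vectors of R^n are represented as functions nat -> R whose
   coordinates of index >= n vanish (predicate [inE n]). *)
Definition vec := nat -> R.

Definition inE (n : nat) (v : vec) : Prop := forall i, (n <= i)%nat -> v i = 0.

Fixpoint sumR (n : nat) (f : nat -> R) : R :=
  match n with O => 0 | S k => sumR k f + f k end.

Definition dot (n : nat) (u v : vec) : R := sumR n (fun i => u i * v i).
Definition vnorm (n : nat) (v : vec) : R := sqrt (dot n v v).
Definition edist (n : nat) (u v : vec) : R := vnorm n (fun i => u i - v i).

Definition open_set (n : nat) (U : vec -> Prop) : Prop :=
  forall x, U x -> exists eps, 0 < eps /\ forall y, inE n y -> edist n x y < eps -> U y.

Definition compact_set (n : nat) (K : vec -> Prop) : Prop :=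
  (forall x, K x -> inE n x) /\
  forall (I : Type) (U : I -> vec -> Prop),
    (forall i, open_set n (U i)) ->
    (forall x, K x -> exists i, U i x) ->
    exists l : list I, forall x, K x -> exists i, In i l /\ U i x.

Definition sphere (m : nat) (x : vec) : Prop := inE (S m) x /\ vnorm (S m) x = 1.

Definition rel_open_sphere (m : nat) (U : vec -> Prop) : Prop :=
  (forall x, U x -> sphere m x) /\
  forall x, U x -> exists eps, 0 < eps /\
    forall y, sphere m y -> edist (S m) x y < eps -> U y.

Definition sphere_domain (m : nat) (Om : vec -> Prop) : Prop :=
  rel_open_sphere m Om /\ (exists x, Om x) /\
  ~ (exists A B : vec -> Prop,
        rel_open_sphere m A /\ rel_open_sphere m B /\
        (exists x, A x) /\ (exists x, B x) /\
        (forall x, Om x <-> (A x \/ B x)) /\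
        (forall x, ~ (A x /\ B x))).

(* rho is C^1 on Om with gradient G with respect to the round metric g_0:
   G x is tangent to S^m at x, rho(y) = rho(x) + <G x, y - x> + o(|y-x|)
   for y in Om, and G is continuous on Om. *)
Definition C1_grad (m : nat) (Om : vec -> Prop) (rho : vec -> R) (G : vec -> vec) : Prop :=
  (forall x, Om x -> inE (S m) (G x) /\ dot (S m) (G x) x = 0) /\
  (forall x, Om x -> forall eps, 0 < eps -> exists delta, 0 < delta /\
     forall y, Om y -> edist (S m) y x < delta ->
       Rabs (rho y - rho x - dot (S m) (G x) (fun i => y i - x i))
         <= eps * edist (S m) y x) /\
  (forall x, Om x -> forall eps, 0 < eps -> exists delta, 0 < delta /\
     forall y, Om y -> edist (S m) y x < delta -> edist (S m) (G y) (G x) < eps).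

Definition curve_of_length (m : nat) (Om : vec -> Prop) (rho : vec -> R)
    (x y : vec) (L : R) : Prop :=
  exists (gam dgam : R -> vec),
    gam 0 = x /\ gam 1 = y /\
    (forall t, 0 <= t <= 1 -> Om (gam t)) /\
    (forall i, (i <= m)%nat -> forall t,
        derivable_pt_lim (fun s => gam s i) t (dgam t i)) /\
    (forall i, (i <= m)%nat -> continuity (fun t => dgam t i)) /\
    exists pr : Riemann_integrable
                  (fun t => exp (rho (gam t)) * vnorm (S m) (dgam t)) 0 1,
      RiemannInt pr = L.

(* The Riemannian distance d_g(x,y) (infimum of lengths) is < eps. *)
Definition dist_g_lt (m : nat) (Om : vec -> Prop) (rho : vec -> R) (x y : vec) (eps : R) : Prop :=
  exists L, L < eps /\ curve_of_length m Om rho x y L.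

Definition complete_conformal (m : nat) (Om : vec -> Prop) (rho : vec -> R) : Prop :=
  forall u : nat -> vec, (forall k, Om (u k)) ->
    (forall eps, 0 < eps -> exists N, forall p q, (N <= p)%nat -> (N <= q)%nat ->
        dist_g_lt m Om rho (u p) (u q) eps) ->
    exists z, Om z /\
      forall eps, 0 < eps -> exists N, forall p, (N <= p)%nat ->
        dist_g_lt m Om rho (u p) z eps.

Definition closure (m : nat) (Om : vec -> Prop) (x : vec) : Prop :=
  inE (S m) x /\ forall eps, 0 < eps -> exists y, Om y /\ edist (S m) x y < eps.

(* Hyperbolic space H^{m+1} in Minkowski space L^{m+2}; index 0 is x_0. *)
Definition hyperbolic (m : nat) (v : vec) : Prop :=
  inE (S (S m)) v /\
  - (v 0%nat) ^ 2 + sumR (S m) (fun i => v (S i) ^ 2) = -1 /\ 0 < v 0%nat.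

Definition phi_map (m : nat) (rho : vec -> R) (G : vec -> vec) (x : vec) : vec :=
  let c := exp (rho x) / 2 *
           (1 + exp (-2 * rho x) * (1 + vnorm (S m) (G x) ^ 2)) in
  fun k => match k with
           | O => c
           | S i => if Nat.leb i m
                    then c * x i + exp (- rho x) * (- x i + G x i)
                    else 0
           end.

Definition proper_map (m : nat) (Om : vec -> Prop) (f : vec -> vec) : Prop :=
  forall K : vec -> Prop, (forall v, K v -> hyperbolic m v) ->
    compact_set (S (S m)) K ->
    compact_set (S m) (fun x => Om x /\ K (f x)).

From Pilot Require Import Defs.
From Stdlib Require Import Reals Lra Lia Psatz FunctionalExtensionality Classical IndefiniteDescription List.
From Coquelicot Require Import Coquelicot.
From mathcomp Require all_boot all_algebra all_classical all_reals all_analysis Rstruct Rstruct_topology.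
Open Scope R_scope.

(* Let K be compact in H^{m+1} and P = phi^{-1}(K). The first coordinate of phi is at
   least e^rho / 2 and is bounded on K, so sigma = e^{-rho} is bounded below on P, and by
   continuity sigma > 0 on the closure of P. But sigma vanishes on the boundary of Om: if
   sigma(p) > 0 at a boundary point p, then e^rho stays bounded on a great-circle arc from a
   point of Om close to p towards p, so the arc has finite g-length up to its first exit
   from Om, and completeness of g puts the exit point back in Om. Hence the closure of P
   lies in Om, where phi is continuous, so P is closed; being bounded in R^{m+1}, it is
   compact by Heine-Borel. *)

Lemma sumR_ext n f g : (forall i, (i < n)%nat -> f i = g i) -> sumR n f = sumR n g.
Proof.
  induction n as [|n IH]; intros H; simpl; [reflexivity|].
  rewrite IH by (intros; apply H; lia). rewrite (H n) by lia. reflexivity.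
Qed.

Lemma sumR_le n f g : (forall i, (i < n)%nat -> f i <= g i) -> sumR n f <= sumR n g.
Proof.
  induction n as [|n IH]; intros H; simpl; [lra|].
  assert (f n <= g n) by (apply H; lia).
  assert (sumR n f <= sumR n g) by (apply IH; intros; apply H; lia). lra.
Qed.

Lemma sumR_const n c : sumR n (fun _ => c) = INR n * c.
Proof. induction n as [|n IH]; simpl sumR; [simpl; ring|]. rewrite IH, S_INR. ring. Qed.

Lemma sumR_nonneg n f : (forall i, (i < n)%nat -> 0 <= f i) -> 0 <= sumR n f.
Proof.
  intros H. rewrite <- (Rmult_0_r (INR n)), <- sumR_const. apply sumR_le, H.
Qed.

Lemma sumR_ge_term n f k : (forall i, (i < n)%nat -> 0 <= f i) -> (k < n)%nat -> f k <= sumR n f.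
Proof.
  induction n as [|n IH]; intros H Hk; simpl; [lia|].
  assert (0 <= sumR n f) by (apply sumR_nonneg; intros; apply H; lia).
  destruct (Nat.eq_dec k n) as [->|Hne]; [lra|].
  assert (f k <= sumR n f) by (apply IH; [intros; apply H|]; lia).
  assert (0 <= f n) by (apply H; lia). lra.
Qed.

Lemma sumR_plus n f g : sumR n (fun i => f i + g i) = sumR n f + sumR n g.
Proof. induction n as [|n IH]; simpl; [ring|]. rewrite IH; ring. Qed.

Lemma sumR_scal n c f : sumR n (fun i => c * f i) = c * sumR n f.
Proof. induction n as [|n IH]; simpl; [ring|]. rewrite IH; ring. Qed.

Lemma Rabs_sumR_le n f : Rabs (sumR n f) <= sumR n (fun i => Rabs (f i)).
Proof.
  induction n as [|n IH]; simpl; [rewrite Rabs_R0; lra|].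
  eapply Rle_trans; [apply Rabs_triang|]. lra.
Qed.

Lemma vec_ext n u v : inE n u -> inE n v -> (forall i, (i < n)%nat -> u i = v i) -> u = v.
Proof.
  intros Hu Hv H. apply functional_extensionality. intros i.
  destruct (Nat.lt_ge_cases i n); [auto|]. rewrite Hu, Hv; auto.
Qed.

Lemma dot_ext n u u' v v' : (forall i, (i < n)%nat -> u i = u' i) ->
  (forall i, (i < n)%nat -> v i = v' i) -> dot n u v = dot n u' v'.
Proof. intros Hu Hv. apply sumR_ext. intros i Hi. rewrite Hu, Hv; auto. Qed.

Lemma dot_sym n u v : dot n u v = dot n v u.
Proof. apply sumR_ext. intros; ring. Qed.

Lemma dot_lin_l n a b u v w :
  dot n (fun i => a * u i + b * v i) w = a * dot n u w + b * dot n v w.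
Proof. unfold dot. rewrite <- !sumR_scal, <- sumR_plus. apply sumR_ext. intros; ring. Qed.

Lemma dot_lin_r n a b u v w :
  dot n w (fun i => a * u i + b * v i) = a * dot n w u + b * dot n w v.
Proof. rewrite dot_sym, dot_lin_l, (dot_sym n u), (dot_sym n v). reflexivity. Qed.

Lemma dot_minus_r n w u v : dot n w (fun i => u i - v i) = dot n w u - dot n w v.
Proof.
  rewrite (dot_ext n w w _ (fun i => 1 * u i + (-1) * v i)), dot_lin_r by (intros; ring). ring.
Qed.

Lemma dot_self_nonneg n v : 0 <= dot n v v.
Proof. apply sumR_nonneg. intros. nra. Qed.

Lemma vnorm_nonneg n v : 0 <= vnorm n v.
Proof. apply sqrt_pos. Qed.

Lemma vnorm_sq n v : vnorm n v * vnorm n v = dot n v v.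
Proof. apply sqrt_sqrt, dot_self_nonneg. Qed.

Lemma vnorm_ext n u v : (forall i, (i < n)%nat -> u i = v i) -> vnorm n u = vnorm n v.
Proof. intros H. unfold vnorm. f_equal. apply dot_ext; auto. Qed.

Lemma Rabs_coord_le_vnorm n v k : (k < n)%nat -> Rabs (v k) <= vnorm n v.
Proof.
  intros Hk. rewrite <- sqrt_Rsqr_abs. apply sqrt_le_1_alt.
  apply (sumR_ge_term n (fun i => v i * v i)); [intros; nra | exact Hk].
Qed.

Lemma vnorm_le_of_coord_le n v e : 0 <= e ->
  (forall i, (i < n)%nat -> Rabs (v i) <= e) -> vnorm n v <= INR n * e.
Proof.
  intros He H.
  assert (Hdot : dot n v v <= INR n * e * e).
  { rewrite Rmult_assoc, <- sumR_const. apply sumR_le. intros i Hi.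
    specialize (H i Hi). pose proof (Rabs_pos (v i)).
    change (Rsqr (v i) <= e * e). rewrite Rsqr_abs. unfold Rsqr. nra. }
  assert (Hn : INR n <= INR n * INR n).
  { destruct n; [simpl; lra|]. rewrite S_INR. pose proof (pos_INR n). nra. }
  pose proof (pos_INR n). apply Rsqr_incr_0_var; [|nra].
  unfold Rsqr. rewrite vnorm_sq. nra.
Qed.

Lemma Rabs_dot_le_unit n e v : dot n e e = 1 -> Rabs (dot n e v) <= vnorm n v.
Proof.
  intros He.
  pose proof (dot_self_nonneg n (fun i => 1 * v i + (- dot n e v) * e i)) as H.
  rewrite dot_lin_l, !dot_lin_r, He, (dot_sym n v e) in H.
  pose proof (vnorm_sq n v). pose proof (vnorm_nonneg n v).
  rewrite <- (Rabs_pos_eq (vnorm n v)) by lra. apply Rsqr_le_abs_0. unfold Rsqr. nra.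
Qed.

Lemma Rabs_dot_le n u v : Rabs (dot n u v) <= vnorm n u * vnorm n v.
Proof.
  pose proof (vnorm_nonneg n u) as Hu0. set (c := vnorm n u) in *.
  destruct (Req_dec c 0) as [Hc|Hc].
  - assert (Hu : forall i, (i < n)%nat -> u i = 0).
    { intros i Hi. pose proof (Rabs_coord_le_vnorm n u i Hi). fold c in H.
      pose proof (Rabs_pos (u i)). destruct (Req_dec (u i) 0) as [|Hne]; [auto|].
      apply Rabs_no_R0 in Hne. lra. }
    unfold dot. rewrite (sumR_ext n _ (fun _ => 0)) by (intros i Hi; rewrite Hu by exact Hi; ring).
    rewrite sumR_const, Rmult_0_r, Rabs_R0, Hc. lra.
  - assert (Hunit : dot n (fun i => / c * u i + 0 * u i) (fun i => / c * u i + 0 * u i) = 1).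
    { rewrite dot_lin_l, !dot_lin_r, <- vnorm_sq. fold c. field. exact Hc. }
    pose proof (Rabs_dot_le_unit n _ v Hunit) as H.
    rewrite dot_lin_l, Rmult_0_l, Rplus_0_r, Rabs_mult, Rabs_inv, (Rabs_pos_eq c) in H by lra.
    apply (Rmult_le_compat_l c) in H; [|lra].
    rewrite <- Rmult_assoc, Rinv_r, Rmult_1_l in H by exact Hc. exact H.
Qed.

Lemma vnorm_triangle n u v : vnorm n (fun i => u i + v i) <= vnorm n u + vnorm n v.
Proof.
  pose proof (vnorm_nonneg n u). pose proof (vnorm_nonneg n v).
  apply Rsqr_incr_0_var; [|lra]. unfold Rsqr. rewrite vnorm_sq.
  rewrite (dot_ext n _ (fun i => 1 * u i + 1 * v i) _ (fun i => 1 * u i + 1 * v i)) by (intros; ring).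
  rewrite dot_lin_l, !dot_lin_r, (dot_sym n v u), <- (vnorm_sq n u), <- (vnorm_sq n v).
  pose proof (Rabs_dot_le n u v). pose proof (Rle_abs (dot n u v)). nra.
Qed.

Lemma edist_nonneg n u v : 0 <= edist n u v.
Proof. apply vnorm_nonneg. Qed.

Lemma edist_refl n u : edist n u u = 0.
Proof.
  unfold edist, vnorm, dot. rewrite (sumR_ext _ _ (fun _ => 0)) by (intros; ring).
  rewrite sumR_const, Rmult_0_r. apply sqrt_0.
Qed.

Lemma edist_sym n u v : edist n u v = edist n v u.
Proof. unfold edist, vnorm, dot. f_equal. apply sumR_ext. intros; ring. Qed.

Lemma edist_triangle n u v w : edist n u w <= edist n u v + edist n v w.
Proof.
  unfold edist. rewrite (vnorm_ext n _ (fun i => (u i - v i) + (v i - w i))) by (intros; ring).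
  apply (vnorm_triangle n (fun i => u i - v i) (fun i => v i - w i)).
Qed.

Lemma Rabs_coord_le_edist n u v k : (k < n)%nat -> Rabs (u k - v k) <= edist n u v.
Proof. apply (Rabs_coord_le_vnorm n (fun i => u i - v i)). Qed.

Lemma edist_sq n u v :
  edist n u v * edist n u v = dot n u u - 2 * dot n u v + dot n v v.
Proof.
  unfold edist. rewrite vnorm_sq.
  rewrite (dot_ext n _ (fun i => 1 * u i + (-1) * v i) _ (fun i => 1 * u i + (-1) * v i)) by (intros; ring).
  rewrite dot_lin_l, !dot_lin_r, (dot_sym n v u). ring.
Qed.

Lemma edist_eq0 n u v : inE n u -> inE n v -> edist n u v = 0 -> u = v.
Proof.
  intros Hu Hv H0. apply (vec_ext n); auto. intros i Hi.
  pose proof (Rabs_coord_le_edist n u v i Hi). pose proof (Rabs_pos (u i - v i)).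
  destruct (Req_dec (u i - v i) 0) as [|Hne]; [lra|]. apply Rabs_no_R0 in Hne. lra.
Qed.

Lemma continuity_pt_sumR n (F : nat -> R -> R) t :
  (forall i, (i < n)%nat -> continuity_pt (F i) t) ->
  continuity_pt (fun s => sumR n (fun i => F i s)) t.
Proof.
  induction n as [|n IH]; intros H; simpl.
  - apply continuity_pt_const. intros a b; reflexivity.
  - apply (continuity_pt_plus (fun s => sumR n (fun i => F i s)) (F n)).
    + apply IH. intros; apply H; lia.
    + apply H; lia.
Qed.

Lemma continuity_pt_vnorm n (F : R -> vec) t :
  (forall i, (i < n)%nat -> continuity_pt (fun s => F s i) t) ->
  continuity_pt (fun s => vnorm n (F s)) t.
Proof.
  intros H. apply (continuity_pt_comp (fun s => dot n (F s) (F s)) sqrt).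
  - apply (continuity_pt_sumR n (fun i s => F s i * F s i)).
    intros. apply continuity_pt_mult; apply H; auto.
  - apply continuity_pt_sqrt, dot_self_nonneg.
Qed.

Lemma derivable_pt_lim_sumR n (F F' : nat -> R -> R) t :
  (forall i, (i < n)%nat -> derivable_pt_lim (F i) t (F' i t)) ->
  derivable_pt_lim (fun s => sumR n (fun i => F i s)) t (sumR n (fun i => F' i t)).
Proof.
  induction n as [|n IH]; intros H; simpl.
  - apply derivable_pt_lim_const.
  - apply (derivable_pt_lim_plus (fun s => sumR n (fun i => F i s)) (F n)).
    + apply IH. intros; apply H; lia.
    + apply H; lia.
Qed.

Lemma continuity_edist_curve n (gam dgam : R -> vec) z :
  (forall i, (i < n)%nat -> forall t, derivable_pt_lim (fun s => gam s i) t (dgam t i)) ->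
  continuity (fun t => edist n (gam t) z).
Proof.
  intros Hder t. apply (continuity_pt_vnorm n (fun s i => gam s i - z i)). intros i Hi.
  apply (continuity_pt_minus (fun s => gam s i) (fun _ => z i));
    [apply derivable_continuous_pt; exists (dgam t i); apply Hder, Hi|].
  apply continuity_pt_const. intros a b; reflexivity.
Qed.

Lemma RiemannInt_nonneg f a b (pr : Riemann_integrable f a b) :
  a <= b -> (forall x, a < x < b -> 0 <= f x) -> 0 <= RiemannInt pr.
Proof.
  intros Hab H. pose proof (RiemannInt_P19 (RiemannInt_P14 a b 0) pr Hab H) as H0.
  rewrite RiemannInt_P15 in H0. lra.
Qed.

Lemma RiemannInt_tail_le f a b c (pr : Riemann_integrable f a b) (pr' : Riemann_integrable f c b) :
  a <= c <= b -> (forall x, a < x < b -> 0 <= f x) -> RiemannInt pr' <= RiemannInt pr.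
Proof.
  intros Hc Hf.
  pose proof (RiemannInt_P26 (RiemannInt_P22 pr Hc) (RiemannInt_P23 pr Hc) pr) as Hsplit.
  rewrite (RiemannInt_P5 pr' (RiemannInt_P23 pr Hc)).
  assert (0 <= RiemannInt (RiemannInt_P22 pr Hc))
    by (apply RiemannInt_nonneg; [lra | intros; apply Hf; lra]).
  lra.
Qed.

Lemma increment_le_RiemannInt (F F' f : R -> R) a b (pr : Riemann_integrable f a b) :
  a <= b -> (forall t, derivable_pt_lim F t (F' t)) -> continuity F' ->
  (forall t, a < t < b -> F' t <= f t) -> F b - F a <= RiemannInt pr.
Proof.
  intros Hab HF HF'c Hle.
  set (dF := fun t => exist (fun l => derivable_pt_lim F t l) (F' t) (HF t) : derivable_pt F t).
  set (prF := continuity_implies_RiemannInt (f := derive F dF) Hab (fun x _ => HF'c x)).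
  assert (HFTC : RiemannInt prF = F b - F a) by exact (@RiemannInt_P33 (@mkC1 F dF HF'c) a b prF Hab).
  rewrite <- HFTC. apply RiemannInt_P19; [exact Hab | exact Hle].
Qed.

Lemma unit_vector_along n u v : 0 < edist n u v ->
  exists e, dot n e e = 1 /\ dot n e u - dot n e v = edist n u v.
Proof.
  intros Hc. set (c := edist n u v) in *.
  assert (Hcc : dot n (fun i => u i - v i) (fun i => u i - v i) = c * c)
    by (unfold c; rewrite <- vnorm_sq; reflexivity).
  exists (fun i => / c * (u i - v i)). split.
  - rewrite (dot_ext n _ (fun i => / c * (u i - v i) + 0 * u i) _ (fun i => / c * (u i - v i) + 0 * u i))
      by (intros; ring).
    rewrite dot_lin_l, !dot_lin_r, Hcc. field. lra.
  - rewrite <- dot_minus_r.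
    rewrite (dot_ext n _ (fun i => / c * (u i - v i) + 0 * u i) _ (fun i => u i - v i))
      by (intros; ring).
    rewrite dot_lin_l, Hcc. field. lra.
Qed.

(* The projection [t |-> <e, gam t>] onto the unit vector along the displacement
   reduces the estimate to the scalar FTC. *)
Lemma displacement_le_RiemannInt n (gam dgam : R -> vec) (f : R -> R) K a b
    (pr : Riemann_integrable f a b) :
  a <= b -> 0 <= K ->
  (forall i, (i < n)%nat -> forall t, derivable_pt_lim (fun s => gam s i) t (dgam t i)) ->
  (forall i, (i < n)%nat -> continuity (fun t => dgam t i)) ->
  (forall t, a < t < b -> K * vnorm n (dgam t) <= f t) ->
  K * edist n (gam b) (gam a) <= RiemannInt pr.
Proof.
  intros Hab HK Hder Hcont Hf.
  destruct (edist_nonneg n (gam b) (gam a)) as [Hc|Hc0].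
  2:{ rewrite <- Hc0, Rmult_0_r. apply RiemannInt_nonneg; [exact Hab|].
      intros t Ht. specialize (Hf t Ht). pose proof (vnorm_nonneg n (dgam t)). nra. }
  destruct (unit_vector_along n (gam b) (gam a) Hc) as [e [Hee Hed]].
  rewrite <- Hed, Rmult_minus_distr_l.
  apply (increment_le_RiemannInt (fun t => K * dot n e (gam t)) (fun t => K * dot n e (dgam t))).
  - exact Hab.
  - intros t. apply (derivable_pt_lim_scal (fun s => dot n e (gam s))).
    apply (derivable_pt_lim_sumR n (fun i s => e i * gam s i) (fun i t => e i * dgam t i)).
    intros i Hi. apply (derivable_pt_lim_scal (fun s => gam s i)). auto.
  - intros t. apply (continuity_pt_scal (fun s => dot n e (dgam s))).
    apply (continuity_pt_sumR n (fun i s => e i * dgam s i)).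
    intros i Hi. apply (continuity_pt_scal (fun s => dgam s i)), Hcont, Hi.
  - intros t Ht. pose proof (Rabs_dot_le_unit n e (dgam t) Hee).
    pose proof (Rle_abs (dot n e (dgam t))). specialize (Hf t Ht). nra.
Qed.

Lemma last_time_above (h : R -> R) e :
  continuity h -> e <= h 0 -> h 1 < e ->
  exists t0, 0 <= t0 < 1 /\ e <= h t0 /\ forall t, t0 < t <= 1 -> h t < e.
Proof.
  intros Hh H0 H1.
  set (E := fun t => 0 <= t <= 1 /\ e <= h t).
  destruct (completeness E) as [t0 [Hub Hlub]].
  { exists 1. intros t [Ht _]. lra. }
  { exists 0. split; [lra | exact H0]. }
  assert (Ht0 : 0 <= t0 <= 1).
  { split; [apply Hub; split; [lra | exact H0] | apply Hlub; intros t [Ht _]; lra]. }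
  assert (Hafter : forall t, t0 < t <= 1 -> h t < e).
  { intros t Ht. apply Rnot_le_lt. intros Hle. assert (t <= t0) by (apply Hub; split; [lra | exact Hle]). lra. }
  assert (Hat : e <= h t0).
  { apply Rnot_lt_le. intros Hlt.
    destruct (Hh t0 (e - h t0)) as [al [Hal Hc]]; [lra|].
    destruct (classic (exists t, E t /\ t0 - al < t)) as [[t [[Ht Eht] Hclose]] | Hno].
    - assert (t <= t0) by (apply Hub; split; auto).
      destruct (Req_dec t t0) as [->|Hne]; [lra|].
      assert (Hd : Rabs (t - t0) < al) by (apply Rabs_def1; lra).
      specialize (Hc t (conj (conj I (not_eq_sym Hne)) Hd)). simpl in Hc. unfold R_dist in Hc.
      apply Rabs_def2 in Hc. lra.
    - assert (t0 <= t0 - al); [|lra].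
      apply Hlub. intros t Et. apply Rnot_lt_le. intros Hgt. apply Hno. exists t; auto. }
  exists t0. repeat split; try lra; auto.
  destruct (proj2 Ht0) as [|Heq]; [lra|]. rewrite Heq in Hat. lra.
Qed.

Lemma first_exit_time (P : R -> Prop) T :
  (forall t, P t -> exists d, 0 < d /\ forall s, Rabs (s - t) < d -> P s) ->
  P 0 -> ~ P T -> 0 <= T ->
  exists ts, 0 < ts <= T /\ ~ P ts /\ forall t, 0 <= t < ts -> P t.
Proof.
  intros Hopen H0 HT HT0.
  set (E := fun t => 0 <= t <= T /\ forall s, 0 <= s <= t -> P s).
  destruct (completeness E) as [ts [Hub Hlub]].
  { exists T. intros t [Ht _]. lra. }
  { exists 0. split; [lra|]. intros s Hs. replace s with 0 by lra. exact H0. }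
  assert (Hts : 0 <= ts <= T).
  { split; [apply Hub | apply Hlub; intros t [Ht _]; lra].
    split; [lra|]. intros s Hs. replace s with 0 by lra. exact H0. }
  assert (Hbefore : forall t, 0 <= t < ts -> P t).
  { intros t Ht. apply NNPP. intros Hnt.
    assert (ts <= t); [|lra].
    apply Hlub. intros t' [Ht' Hall]. apply Rnot_lt_le. intros Hlt. apply Hnt, Hall. lra. }
  assert (Hexit : ~ P ts).
  { intros Hp. destruct (Hopen ts Hp) as [d [Hd Hnear]].
    destruct (Req_dec ts T) as [Heq|Hne]; [rewrite Heq in Hp; contradiction|].
    set (t' := Rmin T (ts + d / 2)).
    assert (Ht' : ts < t' <= T) by (unfold t'; split; [apply Rmin_glb_lt | apply Rmin_l]; lra).
    assert (t' <= ts); [|lra].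
    apply Hub. split; [lra|]. intros s Hs.
    destruct (Rlt_dec s ts); [apply Hbefore; lra|].
    apply Hnear. apply Rabs_def1; [|lra].
    assert (t' <= ts + d / 2) by apply Rmin_r. lra. }
  exists ts. repeat split; try lra; auto.
  destruct (proj1 Hts) as [|Heq]; [lra|]. rewrite <- Heq in Hexit. contradiction.
Qed.

Lemma Rabs_affine_lt a c x s mu : 0 < mu ->
  Rabs (s - x) < mu / (Rabs c + 1) -> Rabs ((a + s * c) - (a + x * c)) < mu.
Proof.
  intros Hmu Hs. pose proof (Rabs_pos c). pose proof (Rabs_pos (s - x)).
  replace (a + s * c - (a + x * c)) with ((s - x) * c) by ring. rewrite Rabs_mult.
  apply (Rmult_lt_compat_r (Rabs c + 1)) in Hs; [|lra].
  replace (mu / (Rabs c + 1) * (Rabs c + 1)) with mu in Hs by (field; lra). nra.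
Qed.

Lemma C1_grad_continuous m Om rho G : C1_grad m Om rho G ->
  forall x, Om x -> forall eps, 0 < eps -> exists d, 0 < d /\
    forall y, Om y -> edist (S m) y x < d -> Rabs (rho y - rho x) < eps.
Proof.
  intros [_ [Hdiff _]] x Hx eps He.
  destruct (Hdiff x Hx 1 Rlt_0_1) as [d1 [Hd1 H1]].
  set (C := sumR (S m) (fun i => Rabs (G x i))).
  assert (HC : 0 <= C) by (apply sumR_nonneg; intros; apply Rabs_pos).
  exists (Rmin d1 (eps / (C + 2))). split; [apply Rmin_glb_lt; [lra | apply Rdiv_lt_0_compat; lra]|].
  intros y Hy Hd.
  assert (Hdd1 : edist (S m) y x < d1) by (eapply Rlt_le_trans; [exact Hd | apply Rmin_l]).
  assert (Hdd2 : edist (S m) y x < eps / (C + 2)) by (eapply Rlt_le_trans; [exact Hd | apply Rmin_r]).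
  specialize (H1 y Hy Hdd1).
  set (lin := dot (S m) (G x) (fun i => y i - x i)) in H1.
  assert (Hlin : Rabs lin <= C * edist (S m) y x).
  { eapply Rle_trans; [apply Rabs_sumR_le|]. unfold C. rewrite Rmult_comm, <- sumR_scal.
    apply sumR_le. intros i Hi. rewrite Rabs_mult, Rmult_comm.
    apply Rmult_le_compat_r; [apply Rabs_pos | apply (Rabs_coord_le_edist (S m) y x i Hi)]. }
  pose proof (Rabs_triang (rho y - rho x - lin) lin) as Htri.
  replace (rho y - rho x - lin + lin) with (rho y - rho x) in Htri by ring.
  assert ((C + 2) * edist (S m) y x < eps).
  { apply (Rmult_lt_compat_l (C + 2)) in Hdd2; [|lra].
    replace ((C + 2) * (eps / (C + 2))) with eps in Hdd2 by (field; lra). exact Hdd2. }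
  pose proof (edist_nonneg (S m) y x). nra.
Qed.

Definition orthonormal_pair (n : nat) (q w : vec) : Prop :=
  inE n q /\ inE n w /\ dot n q q = 1 /\ dot n w w = 1 /\ dot n q w = 0.

Definition great_circle (q w : vec) (t : R) : vec := fun i => cos t * q i + sin t * w i.

Section GreatCircle.
Variables (m : nat) (q w : vec).
Hypothesis Hqw : orthonormal_pair (S m) q w.

Lemma great_circle_dot t s :
  dot (S m) (great_circle q w t) (great_circle q w s) = cos (t - s).
Proof.
  destruct Hqw as (_ & _ & Hqq & Hww & Hq_w). unfold great_circle.
  rewrite dot_lin_l, !dot_lin_r, Hqq, Hww, Hq_w, (dot_sym _ w q), Hq_w, cos_minus. ring.
Qed.

Lemma great_circle_sphere t : sphere m (great_circle q w t).
Proof.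
  destruct Hqw as (Hq & Hw & _). split.
  - intros i Hi. unfold great_circle. rewrite Hq, Hw by exact Hi. ring.
  - unfold vnorm. rewrite great_circle_dot, Rminus_diag, cos_0. apply sqrt_1.
Qed.

Lemma great_circle_edist_sq t s :
  edist (S m) (great_circle q w t) (great_circle q w s) *
  edist (S m) (great_circle q w t) (great_circle q w s) = 2 - 2 * cos (t - s).
Proof. rewrite edist_sq, !great_circle_dot, !Rminus_diag, cos_0. ring. Qed.

Lemma great_circle_uniform_continuous eps : 0 < eps -> exists d, 0 < d /\
  forall t s, Rabs (t - s) < d -> edist (S m) (great_circle q w t) (great_circle q w s) < eps.
Proof.
  intros He.
  destruct (continuity_cos 0 (eps * eps / 2)) as [d [Hd Hcos]]; [nra|].
  exists d. split; [exact Hd|]. intros t s Hts.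
  assert (Hc : 1 - eps * eps / 2 < cos (t - s)).
  { destruct (Req_dec (t - s) 0) as [H0|H0]; [rewrite H0, cos_0; nra|].
    specialize (Hcos (t - s)). simpl in Hcos. unfold R_dist in Hcos.
    rewrite Rminus_0_r, cos_0 in Hcos.
    assert (Hlt : Rabs (cos (t - s) - 1) < eps * eps / 2)
      by (apply Hcos; split; [split; [exact I | auto] | exact Hts]).
    apply Rabs_def2 in Hlt. lra. }
  pose proof (great_circle_edist_sq t s). pose proof (edist_nonneg (S m) (great_circle q w t) (great_circle q w s)).
  nra.
Qed.

Definition arc_velocity (a c s : R) : vec :=
  fun i => c * (- sin (a + s * c) * q i + cos (a + s * c) * w i).

Lemma arc_derivable a c i s :
  derivable_pt_lim (fun s => great_circle q w (a + s * c) i) s (arc_velocity a c s i).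
Proof. apply is_derive_Reals. unfold great_circle, arc_velocity. auto_derive; [easy | ring]. Qed.

Lemma arc_velocity_continuous a c i : continuity (fun s => arc_velocity a c s i).
Proof. unfold arc_velocity. reg. Qed.

Lemma arc_speed a c s : vnorm (S m) (arc_velocity a c s) = Rabs c.
Proof.
  destruct Hqw as (_ & _ & Hqq & Hww & Hq_w). unfold vnorm, arc_velocity.
  rewrite (dot_ext (S m) _ (fun i => (- c * sin (a + s * c)) * q i + (c * cos (a + s * c)) * w i)
                   _ (fun i => (- c * sin (a + s * c)) * q i + (c * cos (a + s * c)) * w i))
    by (intros; ring).
  rewrite dot_lin_l, !dot_lin_r, Hqq, Hww, Hq_w, (dot_sym _ w q), Hq_w, <- sqrt_Rsqr_abs.
  f_equal. unfold Rsqr. pose proof (sin2_cos2 (a + s * c)) as Hpy. unfold Rsqr in Hpy. nra.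
Qed.

End GreatCircle.

Section Conformal.
Variables (m : nat) (Om : vec -> Prop) (rho : vec -> R) (G : vec -> vec).
Hypothesis HC1 : C1_grad m Om rho G.

Lemma rho_path_continuity_pt (gam : R -> vec) t :
  (exists d, 0 < d /\ forall s, Rabs (s - t) < d -> Om (gam s)) ->
  (forall eps, 0 < eps -> exists d, 0 < d /\
     forall s, Rabs (s - t) < d -> edist (S m) (gam s) (gam t) < eps) ->
  continuity_pt (fun s => rho (gam s)) t.
Proof.
  intros [dO [HdO HOm]] Hgam eps He.
  assert (Ht : Om (gam t)) by (apply HOm; rewrite Rminus_diag, Rabs_R0; exact HdO).
  destruct (C1_grad_continuous m Om rho G HC1 (gam t) Ht eps He) as [dr [Hdr Hrho]].
  destruct (Hgam dr Hdr) as [dg [Hdg Hclose]].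
  exists (Rmin dO dg). split; [apply Rmin_glb_lt; lra|].
  intros s [_ Hs]. simpl in *. unfold R_dist in *.
  assert (Rabs (s - t) < dO) by (eapply Rlt_le_trans; [exact Hs | apply Rmin_l]).
  assert (Rabs (s - t) < dg) by (eapply Rlt_le_trans; [exact Hs | apply Rmin_r]).
  apply Hrho; auto.
Qed.

Section Arc.
Variables (q w : vec) (ts Eb : R).
Hypothesis Hqw : orthonormal_pair (S m) q w.
Hypothesis Harc : forall t, 0 <= t < ts -> Om (great_circle q w t).
Hypothesis Hbound : forall t, 0 <= t < ts -> exp (rho (great_circle q w t)) <= Eb.

Lemma arc_rho_continuity_pt a c x : 0 < a + x * c < ts ->
  continuity_pt (fun s => rho (great_circle q w (a + s * c))) x.
Proof.
  intros Hx. pose proof (Rabs_pos c).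
  apply (rho_path_continuity_pt (fun s => great_circle q w (a + s * c))).
  - set (mu := Rmin (a + x * c) (ts - (a + x * c))).
    assert (Hmu : 0 < mu) by (unfold mu; apply Rmin_glb_lt; lra).
    exists (mu / (Rabs c + 1)). split; [apply Rdiv_lt_0_compat; lra|].
    intros s Hs. apply Harc.
    pose proof (Rabs_affine_lt a c x s mu Hmu Hs) as Hmove. apply Rabs_def2 in Hmove.
    assert (mu <= a + x * c) by apply Rmin_l. assert (mu <= ts - (a + x * c)) by apply Rmin_r. lra.
  - intros eps He.
    destruct (great_circle_uniform_continuous m q w Hqw eps He) as [d [Hd Huc]].
    exists (d / (Rabs c + 1)). split; [apply Rdiv_lt_0_compat; lra|].
    intros s Hs. apply Huc, Rabs_affine_lt; assumption.
Qed.

Lemma arc_curve_of_length a b : 0 < a < ts -> 0 < b < ts ->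
  exists L, L <= Eb * Rabs (b - a) /\
    curve_of_length m Om rho (great_circle q w a) (great_circle q w b) L.
Proof.
  intros Ha Hb. set (c := b - a). set (gam := fun s => great_circle q w (a + s * c)).
  assert (Hseg : forall s, 0 <= s <= 1 -> 0 < a + s * c < ts).
  { intros s Hs. destruct (Rle_dec 0 c).
    - assert (0 <= s * c <= c) by (split; nra). unfold c in *. lra.
    - assert (c <= s * c <= 0) by (split; nra). unfold c in *. lra. }
  set (I := fun s => exp (rho (gam s)) * vnorm (S m) (arc_velocity q w a c s)).
  assert (Hcont : forall x, 0 <= x <= 1 -> continuity_pt I x).
  { intros x Hx. apply continuity_pt_mult.
    - apply (continuity_pt_comp (fun s => rho (gam s)) exp);
        [apply arc_rho_continuity_pt, Hseg, Hx | apply derivable_continuous_pt, derivable_pt_exp].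
    - apply continuity_pt_vnorm. intros i _. apply arc_velocity_continuous. }
  assert (H01 : 0 <= 1) by lra.
  set (pr := continuity_implies_RiemannInt H01 Hcont).
  exists (RiemannInt pr). split.
  - pose proof (RiemannInt_P19 pr (RiemannInt_P14 0 1 (Eb * Rabs c)) H01) as Hle.
    rewrite RiemannInt_P15, Rminus_0_r, Rmult_1_r in Hle. apply Hle.
    intros x Hx. unfold I, fct_cte. rewrite arc_speed by exact Hqw.
    apply Rmult_le_compat_r; [apply Rabs_pos|].
    apply Hbound. pose proof (Hseg x (conj (Rlt_le _ _ (proj1 Hx)) (Rlt_le _ _ (proj2 Hx)))). lra.
  - exists gam, (arc_velocity q w a c). repeat split.
    + unfold gam. f_equal. ring.
    + unfold gam, c. f_equal. ring.
    + intros t Ht. apply Harc. pose proof (Hseg t Ht). lra.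
    + intros i _ t. apply arc_derivable.
    + intros i _. apply arc_velocity_continuous.
    + exists pr. reflexivity.
Qed.

End Arc.

(* Near [z] the conformal factor [exp rho] is bounded below, so a curve ending at [z]
   that leaves the Euclidean ball B(z, e) has length at least a fixed multiple of [e]. *)
Lemma short_curve_edist_lt z : Om z -> forall eps, 0 < eps -> exists eta, 0 < eta /\
  forall y L, L < eta -> curve_of_length m Om rho y z L -> edist (S m) y z < eps.
Proof.
  intros Hz eps Heps.
  destruct (C1_grad_continuous m Om rho G HC1 z Hz 1 Rlt_0_1) as [d [Hd Hrho]].
  set (e := Rmin eps (d / 2)).
  assert (He : 0 < e) by (apply Rmin_glb_lt; lra).
  set (K := exp (rho z - 1)).
  assert (HK : 0 < K) by apply exp_pos.
  exists (K * e). split; [nra|].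
  intros y L HL [gam [dgam [H0 [H1 [Hin [Hder [Hcont [pr Hpr]]]]]]]].
  destruct (Rlt_dec (edist (S m) y z) e) as [Hlt|Hge]; [eapply Rlt_le_trans; [exact Hlt | apply Rmin_l]|].
  exfalso. apply Rnot_lt_le in Hge.
  set (h := fun t => edist (S m) (gam t) z).
  assert (Hh : continuity h)
    by (apply (continuity_edist_curve (S m) gam dgam z); intros i Hi; apply Hder; lia).
  destruct (last_time_above h e Hh) as [t0 [Ht0 [Hleave Hafter]]].
  { unfold h. rewrite H0. exact Hge. }
  { unfold h. rewrite H1, edist_refl. exact He. }
  assert (HKrho : forall t, t0 < t < 1 -> K * vnorm (S m) (dgam t) <= exp (rho (gam t)) * vnorm (S m) (dgam t)).
  { intros t Ht. apply Rmult_le_compat_r; [apply vnorm_nonneg|].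
    assert (Hclose : Rabs (rho (gam t) - rho z) < 1).
    { apply Hrho; [apply Hin; lra|].
      assert (h t < e) by (apply Hafter; lra). assert (e <= d / 2) by apply Rmin_r.
      unfold h in *. lra. }
    apply Rabs_def2 in Hclose. apply Rlt_le, exp_increasing. unfold K. lra. }
  assert (Ht01 : 0 <= t0 <= 1) by lra.
  pose proof (displacement_le_RiemannInt (S m) gam dgam _ K t0 1 (RiemannInt_P23 pr Ht01))
    as Hdisp.
  pose proof (RiemannInt_tail_le _ 0 1 t0 pr (RiemannInt_P23 pr Ht01) Ht01) as Htail.
  assert (Hlong : K * h t0 <= L).
  { rewrite <- Hpr. unfold h. rewrite edist_sym, <- H1.
    eapply Rle_trans; [apply Hdisp | apply Htail]; try lra.
    - intros i Hi. apply Hder. lia.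
    - intros i Hi. apply Hcont. lia.
    - exact HKrho.
    - intros t _. pose proof (exp_pos (rho (gam t))). pose proof (vnorm_nonneg (S m) (dgam t)). nra. }
  nra.
Qed.

End Conformal.

Lemma approach_from_left ts : 0 < ts -> exists t : nat -> R,
  (forall k, 0 < t k < ts) /\
  forall eps, 0 < eps -> exists N, forall k, (N <= k)%nat -> ts - eps < t k.
Proof.
  intros Hts. exists (fun k => ts - ts / (INR k + 2)). split.
  - intros k. pose proof (pos_INR k).
    assert (ts / (INR k + 2) <= ts / 2)
      by (apply Rmult_le_compat_l; [lra | apply Rinv_le_contravar; lra]).
    assert (0 < ts / (INR k + 2)) by (apply Rdiv_lt_0_compat; lra). lra.
  - intros eps He. destruct (INR_unbounded (ts / eps)) as [N HN]. exists N. intros k Hk.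
    apply le_INR in Hk. pose proof (pos_INR N).
    assert (Hlt : ts < eps * (INR k + 2)).
    { apply (Rmult_lt_compat_l eps) in HN; [|exact He].
      replace (eps * (ts / eps)) with ts in HN by (field; lra). nra. }
    assert (ts / (INR k + 2) < eps); [|lra].
    apply (Rmult_lt_reg_r (INR k + 2)); [lra|]. unfold Rdiv. rewrite Rmult_assoc, Rinv_l; lra.
Qed.

Lemma sphere_inE m x : sphere m x -> inE (S m) x.
Proof. intros [H _]. exact H. Qed.

Lemma sphere_dot m x : sphere m x -> dot (S m) x x = 1.
Proof. intros [_ H]. rewrite <- vnorm_sq, H. ring. Qed.

Lemma closure_sphere m Om p : (forall x, Om x -> sphere m x) -> closure m Om p -> sphere m p.
Proof.
  intros Hs [Hin Hcl]. split; [exact Hin|].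
  apply Rle_antisym; apply le_epsilon; intros eps He;
    destruct (Hcl eps He) as [y [Hy Hd]]; destruct (Hs y Hy) as [_ Hy1].
  - pose proof (vnorm_triangle (S m) y (fun i => p i - y i)) as Htri. cbv beta in Htri.
    rewrite (vnorm_ext (S m) (fun i => y i + (p i - y i)) p) in Htri by (intros; ring).
    fold (edist (S m) p y) in Htri. lra.
  - pose proof (vnorm_triangle (S m) p (fun i => y i - p i)) as Htri. cbv beta in Htri.
    rewrite (vnorm_ext (S m) (fun i => p i + (y i - p i)) y) in Htri by (intros; ring).
    fold (edist (S m) y p) in Htri. rewrite edist_sym in Htri. lra.
Qed.

Lemma great_circle_through m p q : sphere m p -> sphere m q -> -1 < dot (S m) p q < 1 ->
  exists w, orthonormal_pair (S m) q w /\ great_circle q w (acos (dot (S m) p q)) = p.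
Proof.
  intros Hp Hq Hd.
  set (d := dot (S m) p q) in *.
  pose proof (sphere_dot m p Hp) as Hpp. pose proof (sphere_dot m q Hq) as Hqq.
  set (th := acos d).
  assert (Hcth : cos th = d) by (apply cos_acos; lra).
  assert (Hsth : sin th * sin th = 1 - d * d).
  { unfold th. rewrite sin_acos by lra. apply sqrt_sqrt. unfold Rsqr. nra. }
  assert (Hs0 : 0 < sin th).
  { unfold th. rewrite sin_acos by lra. apply sqrt_lt_R0. unfold Rsqr. nra. }
  set (s := sin th) in *.
  exists (fun i => / s * p i + (- d / s) * q i). split.
  - split; [apply Hq|]. split.
    { intros i Hi. rewrite (sphere_inE m p Hp), (sphere_inE m q Hq) by exact Hi. ring. }
    split; [exact Hqq|]. split.
    + rewrite dot_lin_l, !dot_lin_r, Hqq, Hpp, (dot_sym _ q p). fold d.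
      transitivity ((1 - d * d) / (s * s)); [field; lra|]. rewrite <- Hsth. field. lra.
    + rewrite dot_lin_r, Hqq, (dot_sym _ q p). fold d. field. lra.
  - apply functional_extensionality. intros i. unfold great_circle. fold s. rewrite Hcth. field. lra.
Qed.

Lemma great_circle_arc m p q : sphere m p -> sphere m q -> p <> q -> edist (S m) q p < 2 ->
  exists w th, orthonormal_pair (S m) q w /\ 0 < th /\
    great_circle q w 0 = q /\ great_circle q w th = p /\
    forall tau, 0 <= tau <= th -> edist (S m) (great_circle q w tau) p <= edist (S m) q p.
Proof.
  intros Hp Hq Hpq H2.
  set (d := dot (S m) p q).
  assert (Hed : edist (S m) q p * edist (S m) q p = 2 - 2 * d)
    by (rewrite edist_sq, (sphere_dot m p Hp), (sphere_dot m q Hq), dot_sym; unfold d; ring).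
  pose proof (edist_nonneg (S m) q p).
  assert (Hd1 : d < 1).
  { apply Rnot_le_lt. intros Hle. apply Hpq. symmetry.
    apply (edist_eq0 (S m)); [apply Hq | apply Hp | nra]. }
  assert (Hd2 : -1 < d) by nra.
  destruct (great_circle_through m p q Hp Hq (conj Hd2 Hd1)) as [w [Hqw Hend]].
  fold d in Hend. set (th := acos d) in Hend.
  assert (Hcth : cos th = d) by (apply cos_acos; lra).
  assert (Hthb : 0 <= th <= PI) by apply acos_bound.
  exists w, th. split; [exact Hqw|]. split; [|split; [|split; [exact Hend|]]].
  - destruct (proj1 Hthb) as [|Hth0]; [assumption|].
    rewrite <- Hth0, cos_0 in Hcth. lra.
  - apply functional_extensionality. intros i. unfold great_circle. rewrite cos_0, sin_0. ring.
  - intros tau Htau.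
    assert (Hcos : cos th <= cos (tau - th)).
    { replace (tau - th) with (- (th - tau)) by ring. rewrite cos_neg. apply cos_decr_1; lra. }
    pose proof (great_circle_edist_sq m q w Hqw tau th) as Hsq. rewrite Hend in Hsq.
    pose proof (edist_nonneg (S m) (great_circle q w tau) p).
    apply Rsqr_incr_0_var; [unfold Rsqr; nra | lra].
Qed.

Section Boundary.
Variables (m : nat) (Om : vec -> Prop) (rho : vec -> R) (G : vec -> vec).
Hypothesis Hop : rel_open_sphere m Om.
Hypothesis HC1 : C1_grad m Om rho G.
Hypothesis Hcpl : complete_conformal m Om rho.

(* The arc up to [ts] has finite g-length, so points approaching [great_circle ts]
   form a d_g-Cauchy sequence; completeness puts its limit, which is that endpoint, in [Om]. *)
Lemma arc_endpoint_in_domain q w ts Eb :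
  orthonormal_pair (S m) q w -> 0 < ts ->
  (forall t, 0 <= t < ts -> Om (great_circle q w t)) ->
  (forall t, 0 <= t < ts -> exp (rho (great_circle q w t)) <= Eb) ->
  Om (great_circle q w ts).
Proof.
  intros Hqw Hts Harc Hbound.
  assert (HEb : 0 < Eb) by (pose proof (exp_pos (rho (great_circle q w 0))); pose proof (Hbound 0); lra).
  destruct (approach_from_left ts Hts) as [t [Ht Hto]].
  set (u := fun k => great_circle q w (t k)).
  assert (Hu : forall k, Om (u k)) by (intros k; apply Harc; pose proof (Ht k); lra).
  assert (Hcauchy : forall eps, 0 < eps -> exists N, forall a b, (N <= a)%nat -> (N <= b)%nat ->
            dist_g_lt m Om rho (u a) (u b) eps).
  { intros eps He. destruct (Hto (eps / Eb)) as [N HN]; [apply Rdiv_lt_0_compat; lra|].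
    exists N. intros a b Ha Hb.
    destruct (arc_curve_of_length m Om rho G HC1 q w ts Eb Hqw Harc Hbound (t a) (t b) (Ht a) (Ht b))
      as [L [HL Hcurve]].
    exists L. split; [|exact Hcurve].
    assert (Hab : Rabs (t b - t a) < eps / Eb).
    { pose proof (Ht a). pose proof (Ht b). pose proof (HN a Ha). pose proof (HN b Hb).
      apply Rabs_def1; lra. }
    apply (Rmult_lt_compat_l Eb) in Hab; [|exact HEb].
    replace (Eb * (eps / Eb)) with eps in Hab by (field; lra). lra. }
  destruct (Hcpl u Hu Hcauchy) as [z [Hz Hlim]].
  replace (great_circle q w ts) with z; [exact Hz|].
  apply (edist_eq0 (S m)); [apply (proj1 Hop z Hz) | apply great_circle_sphere, Hqw|].
  apply Rle_antisym; [|apply edist_nonneg].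
  apply le_epsilon. intros eps He. rewrite Rplus_0_l.
  destruct (short_curve_edist_lt m Om rho G HC1 z Hz (eps / 2)) as [eta [Heta Hshort]]; [lra|].
  destruct (Hlim eta Heta) as [N1 HN1].
  destruct (great_circle_uniform_continuous m q w Hqw (eps / 2)) as [d [Hd Huc]]; [lra|].
  destruct (Hto d Hd) as [N2 HN2].
  set (k := max N1 N2).
  destruct (HN1 k (Nat.le_max_l _ _)) as [L [HL Hcurve]].
  pose proof (Hshort (u k) L HL Hcurve) as Hzk.
  assert (Hk : edist (S m) (u k) (great_circle q w ts) < eps / 2).
  { apply Huc. pose proof (Ht k). pose proof (HN2 k (Nat.le_max_r _ _)). apply Rabs_def1; lra. }
  pose proof (edist_triangle (S m) z (u k) (great_circle q w ts)).
  rewrite edist_sym in Hzk. lra.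
Qed.

Lemma domain_in_closure x : Om x -> closure m Om x.
Proof.
  intros Hx. split; [apply (sphere_inE m x), (proj1 Hop x Hx)|].
  intros eps He. exists x. split; [exact Hx|]. rewrite edist_refl. exact He.
Qed.

Variable sig : vec -> R.
Hypothesis Hsig : forall x, Om x -> sig x = exp (- rho x).
Hypothesis Hsig_cont : forall x, closure m Om x -> forall eps, 0 < eps -> exists delta, 0 < delta /\
  forall y, closure m Om y -> edist (S m) y x < delta -> Rabs (sig y - sig x) < eps.

Lemma sig_nonpos_on_boundary p : closure m Om p -> ~ Om p -> sig p <= 0.
Proof.
  intros Hcl Hnp. apply Rnot_lt_le. intros Hsp.
  destruct (Hsig_cont p Hcl (sig p / 2)) as [dl [Hdl Hnear]]; [lra|].
  destruct (proj2 Hcl (Rmin dl 2)) as [q [Hq Hpq]]; [apply Rmin_glb_lt; lra|].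
  rewrite edist_sym in Hpq.
  assert (Hqp_dl : edist (S m) q p < dl) by (eapply Rlt_le_trans; [exact Hpq | apply Rmin_l]).
  assert (Hqp_2 : edist (S m) q p < 2) by (eapply Rlt_le_trans; [exact Hpq | apply Rmin_r]).
  assert (Hneq : p <> q) by (intros ->; contradiction).
  destruct (great_circle_arc m p q (closure_sphere m Om p (proj1 Hop) Hcl) (proj1 Hop q Hq) Hneq Hqp_2)
    as [w [th [Hqw [Hth [H0 [Hth_p Harc_near]]]]]].
  destruct (first_exit_time (fun t => Om (great_circle q w t)) th) as [ts [Hts [Hexit Hbefore]]].
  - intros t Ht. destruct (proj2 Hop _ Ht) as [eo [Heo Hball]].
    destruct (great_circle_uniform_continuous m q w Hqw eo Heo) as [d [Hd Huc]].
    exists d. split; [exact Hd|]. intros s Hs.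
    apply Hball; [apply great_circle_sphere, Hqw | apply Huc; rewrite Rabs_minus_sym; exact Hs].
  - rewrite H0. exact Hq.
  - rewrite Hth_p. exact Hnp.
  - lra.
  - apply Hexit. apply (arc_endpoint_in_domain q w ts (2 / sig p)); [exact Hqw | lra | exact Hbefore|].
    intros t Ht. pose proof (Hbefore t Ht) as HOm.
    assert (Hclose : Rabs (sig (great_circle q w t) - sig p) < sig p / 2).
    { apply Hnear; [apply domain_in_closure, HOm|].
      eapply Rle_lt_trans; [apply Harc_near; lra | exact Hqp_dl]. }
    rewrite Hsig, exp_Ropp in Hclose by exact HOm. apply Rabs_def2 in Hclose.
    set (E := exp (rho (great_circle q w t))) in *.
    assert (HE : 0 < / E) by (apply Rinv_0_lt_compat, exp_pos).
    assert (Hlt : / / E < / (sig p / 2)) by (apply Rinv_lt_contravar; nra).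
    rewrite Rinv_inv in Hlt. replace (2 / sig p) with (/ (sig p / 2)) by (field; lra). lra.
Qed.
End Boundary.

Lemma Un_cv_const c : Un_cv (fun _ => c) c.
Proof. intros eps He. exists 0%nat. intros. unfold R_dist. rewrite Rminus_diag, Rabs_R0. exact He. Qed.

Lemma Un_cv_sumR n (F : nat -> nat -> R) (l : nat -> R) :
  (forall k, (k < n)%nat -> Un_cv (fun j => F j k) (l k)) -> Un_cv (fun j => sumR n (F j)) (sumR n l).
Proof.
  induction n as [|n IH]; intros H; simpl; [apply Un_cv_const|].
  apply (CV_plus (fun j => sumR n (F j)) (fun j => F j n)); [apply IH; intros; apply H|apply H]; lia.
Qed.

Lemma Un_cv_edist_0 n (a : nat -> vec) b :
  (forall k, (k < n)%nat -> Un_cv (fun j => a j k) (b k)) -> Un_cv (fun j => edist n (a j) b) 0.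
Proof.
  intros H. unfold edist, vnorm, dot. rewrite <- sqrt_0.
  apply (continuity_seq sqrt); [apply continuity_pt_sqrt; lra|].
  replace 0 with (sumR n (fun _ => 0)) by (rewrite sumR_const; ring).
  apply (Un_cv_sumR n (fun j k => (a j k - b k) * (a j k - b k))). intros k Hk.
  replace 0 with ((b k - b k) * (b k - b k)) by ring.
  apply (CV_mult (fun j => a j k - b k) (fun j => a j k - b k));
    apply (CV_minus _ (fun _ => b k)); auto; apply Un_cv_const.
Qed.

Lemma Un_cv_coord n (a : nat -> vec) b k : (k < n)%nat ->
  Un_cv (fun j => edist n (a j) b) 0 -> Un_cv (fun j => a j k) (b k).
Proof.
  intros Hk H eps He. destruct (H eps He) as [N HN]. exists N. intros j Hj. specialize (HN j Hj).
  unfold R_dist in *. rewrite Rminus_0_r, Rabs_pos_eq in HN by apply edist_nonneg.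
  pose proof (Rabs_coord_le_edist n (a j) b k Hk). lra.
Qed.

Lemma Un_cv_edist_of_continuous n n' (D : vec -> Prop) (f : vec -> vec) x (y : nat -> vec) :
  (forall eps, 0 < eps -> exists d, 0 < d /\ forall z, D z -> edist n z x < d -> edist n' (f z) (f x) < eps) ->
  (forall j, D (y j)) -> Un_cv (fun j => edist n (y j) x) 0 ->
  Un_cv (fun j => edist n' (f (y j)) (f x)) 0.
Proof.
  intros Hf Hy Hcv eps He. destruct (Hf eps He) as [d [Hd Hfd]].
  destruct (Hcv d Hd) as [N HN]. exists N. intros j Hj. specialize (HN j Hj).
  unfold R_dist in *. rewrite Rminus_0_r, Rabs_pos_eq in * by apply edist_nonneg. auto.
Qed.

Lemma continuous_of_seq_continuous n n' (D : vec -> Prop) (f : vec -> vec) x :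
  (forall y : nat -> vec, (forall j, D (y j)) -> Un_cv (fun j => edist n (y j) x) 0 ->
     Un_cv (fun j => edist n' (f (y j)) (f x)) 0) ->
  forall eps, 0 < eps -> exists d, 0 < d /\
    forall z, D z -> edist n z x < d -> edist n' (f z) (f x) < eps.
Proof.
  intros Hseq eps He. apply NNPP. intros Hno.
  assert (Hbad : forall j : nat, exists z, (D z /\ edist n z x < / (INR j + 1)) /\ eps <= edist n' (f z) (f x)).
  { intros j. apply NNPP. intros Hj. apply Hno. exists (/ (INR j + 1)).
    split; [apply Rinv_0_lt_compat; pose proof (pos_INR j); lra|].
    intros z Hz Hzx. apply Rnot_le_lt. intros Hle. apply Hj. exists z. auto. }
  set (y := fun j => proj1_sig (constructive_indefinite_description _ (Hbad j))).
  assert (Hy : forall j, (D (y j) /\ edist n (y j) x < / (INR j + 1)) /\ eps <= edist n' (f (y j)) (f x))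
    by (intros j; unfold y; destruct constructive_indefinite_description; simpl; auto).
  assert (Hcv : Un_cv (fun j => edist n (y j) x) 0).
  { intros e Hpos. destruct (INR_unbounded (/ e)) as [N HN]. exists N. intros j Hj.
    unfold R_dist. rewrite Rminus_0_r, Rabs_pos_eq by apply edist_nonneg.
    eapply Rlt_le_trans; [apply (Hy j)|]. apply le_INR in Hj.
    rewrite <- (Rinv_inv e). apply Rinv_le_contravar; [apply Rinv_0_lt_compat|]; lra. }
  destruct (Hseq y (fun j => proj1 (proj1 (Hy j))) Hcv eps He) as [N HN].
  specialize (HN N (Nat.le_refl N)). unfold R_dist in HN.
  rewrite Rminus_0_r, Rabs_pos_eq in HN by apply edist_nonneg.
  pose proof (proj2 (Hy N)). lra.
Qed.

Lemma phi_map_inE m rho G x : inE (S (S m)) (phi_map m rho G x).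
Proof.
  intros [|k] Hk; [lia|]. unfold phi_map. destruct (Nat.leb k m) eqn:E; [|reflexivity].
  apply Nat.leb_le in E. lia.
Qed.

Lemma phi_map_coord0_ge m rho G x : exp (rho x) / 2 <= phi_map m rho G x 0%nat.
Proof.
  simpl. pose proof (exp_pos (rho x)). pose proof (exp_pos (-2 * rho x)).
  pose proof (pow2_ge_0 (vnorm (S m) (G x))).
  assert (0 <= exp (rho x) / 2 * (exp (-2 * rho x) * (1 + vnorm (S m) (G x) ^ 2)))
    by (apply Rmult_le_pos; [lra | apply Rmult_le_pos; lra]).
  nra.
Qed.

Lemma phi_map_continuous m Om rho G : C1_grad m Om rho G -> forall x, Om x ->
  forall eps, 0 < eps -> exists d, 0 < d /\
    forall y, Om y -> edist (S m) y x < d -> edist (S (S m)) (phi_map m rho G y) (phi_map m rho G x) < eps.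
Proof.
  intros HC1 x Hx. apply continuous_of_seq_continuous. intros y Hy Hcv.
  apply Un_cv_edist_0. intros k _.
  assert (Hrho : Un_cv (fun j => rho (y j)) (rho x)).
  { intros eps He. destruct (C1_grad_continuous m Om rho G HC1 x Hx eps He) as [d [Hd Hr]].
    destruct (Hcv d Hd) as [N HN]. exists N. intros j Hj. apply Hr; [apply Hy|]. specialize (HN j Hj).
    unfold R_dist in HN. rewrite Rminus_0_r, Rabs_pos_eq in HN by apply edist_nonneg. exact HN. }
  assert (HG : Un_cv (fun j => edist (S m) (G (y j)) (G x)) 0)
    by (apply (Un_cv_edist_of_continuous (S m) (S m) Om G); auto; apply (proj2 (proj2 HC1)), Hx).
  assert (Hnorm : Un_cv (fun j => vnorm (S m) (G (y j)) ^ 2) (vnorm (S m) (G x) ^ 2)).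
  { apply (Un_cv_ext (fun j => dot (S m) (G (y j)) (G (y j)))); [intros; rewrite <- vnorm_sq; ring|].
    replace (vnorm (S m) (G x) ^ 2) with (dot (S m) (G x) (G x)) by (rewrite <- vnorm_sq; ring).
    apply (Un_cv_sumR (S m) (fun j k => G (y j) k * G (y j) k)). intros i Hi.
    apply CV_mult; apply (Un_cv_coord (S m) (fun j => G (y j)) (G x) i); auto. }
  assert (Hc : Un_cv (fun j => phi_map m rho G (y j) 0%nat) (phi_map m rho G x 0%nat)).
  { simpl. apply (CV_mult (fun j => exp (rho (y j)) / 2)).
    - apply (continuity_seq (fun r => exp r / 2)); [reg|exact Hrho].
    - apply (CV_plus (fun _ => 1)); [apply Un_cv_const|].
      apply (CV_mult (fun j => exp (-2 * rho (y j)))).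
      + apply (continuity_seq (fun r => exp (-2 * r))); [reg|exact Hrho].
      + apply (CV_plus (fun _ => 1)); [apply Un_cv_const | exact Hnorm]. }
  destruct k as [|i]; [exact Hc|]. unfold phi_map at 2. cbv zeta.
  destruct (Nat.leb i m) eqn:Hi; [|apply (Un_cv_ext (fun _ => 0)); [|apply Un_cv_const]].
  - pose proof (proj1 (Nat.leb_le i m) Hi) as Him.
    assert (Hyi : Un_cv (fun j => y j i) (x i)) by (apply (Un_cv_coord (S m) y x i); auto; lia).
    assert (HGi : Un_cv (fun j => G (y j) i) (G x i)) by (apply (Un_cv_coord (S m) (fun j => G (y j)) (G x) i); auto; lia).
    apply (Un_cv_ext (fun j => phi_map m rho G (y j) 0%nat * y j i + exp (- rho (y j)) * (G (y j) i - y j i))).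
    { intros j. unfold phi_map. rewrite Hi. simpl. ring. }
    replace (- x i + G x i) with (G x i - x i) by ring.
    apply CV_plus; [apply CV_mult; assumption|].
    apply CV_mult; [apply (continuity_seq (fun r => exp (- r))); [reg|exact Hrho]|].
    apply CV_minus; assumption.
  - intros j. unfold phi_map. rewrite Hi. reflexivity.
Qed.

Definition euclid_closed (n : nat) (A : vec -> Prop) : Prop :=
  forall x, inE n x -> (forall eps, 0 < eps -> exists y, A y /\ edist n x y < eps) -> A x.

Lemma edist_lt_of_coord_lt n u v eps : 0 < eps ->
  (forall i, (i < n)%nat -> Rabs (u i - v i) < eps / (INR n + 1)) -> edist n u v < eps.
Proof.
  intros He H. pose proof (pos_INR n).
  assert (Hq : 0 < eps / (INR n + 1)) by (apply Rdiv_lt_0_compat; lra).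
  apply Rle_lt_trans with (INR n * (eps / (INR n + 1))).
  - apply (vnorm_le_of_coord_le n (fun i => u i - v i)); [lra|]. intros i Hi. apply Rlt_le, H, Hi.
  - replace eps with ((INR n + 1) * (eps / (INR n + 1))) at 2 by (field; lra). nra.
Qed.

Lemma Rabs_le_inv x M : Rabs x <= M -> - M <= x <= M.
Proof. intros H. pose proof (Rle_abs x). pose proof (Rle_abs (- x)). rewrite Rabs_Ropp in *. lra. Qed.

(* Heine-Borel, transported from the row vectors of MathComp-Analysis. *)
Module HeineBorel.
Import all_boot all_algebra all_classical all_reals all_analysis Rstruct Rstruct_topology.
Import Num.Def Num.Theory GRing.Theory numFieldNormedType.Exports.
Local Open Scope classical_set_scope.
Local Open Scope ring_scope.

Definition toV n (r : 'rV[R]_n) : vec := fun k =>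
  match (insub k : option 'I_n) with Some i => r ord0 i | None => 0 end.
Arguments toV {n}.

Lemma toV_lt {n} (r : 'rV[R]_n) (i : 'I_n) : toV r i = r ord0 i.
Proof. by rewrite /toV valK. Qed.

Lemma toV_inE {n} (r : 'rV[R]_n) : Defs.inE n (toV r).
Proof. by move=> k /leP h; rewrite /toV insubF // ltnNge h. Qed.

Lemma toV_row n v : Defs.inE n v -> toV (\row_(i < n) v i) = v.
Proof.
move=> hv; apply: functional_extensionality_dep => k.
case: (ltnP k n) => hk; first by rewrite (toV_lt _ (Ordinal hk)) mxE.
by rewrite [LHS]/toV insubF ?ltnNge ?hk // hv //; apply/leP.
Qed.

Lemma edist_toV_lt {n} (r r' : 'rV[R]_n) eps : (0 < eps)%coqR ->
  ball r (eps / (INR n + 1))%coqR r' -> (Defs.edist n (toV r) (toV r') < eps)%coqR.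
Proof.
move=> he [_ hb]; apply: edist_lt_of_coord_lt => // k /ltP hk.
by have /RltP := hb ord0 (Ordinal hk); rewrite /ball /= -!toV_lt.
Qed.

Lemma In_of_mem (T : eqType) (s : seq T) x : x \in s -> List.In x s.
Proof. by elim: s => //= a s IH; rewrite in_cons => /orP [/eqP ->|/IH]; [left|right]. Qed.

Lemma closed_bounded_compact n (A : vec -> Prop) : (forall x, A x -> Defs.inE n x) ->
  (exists M, forall x, A x -> (vnorm n x <= M)%coqR) -> euclid_closed n A -> compact_set n A.
Proof.
move=> hin [M hM] hcl; split => // I U hop hcov.
pose B := [set r : 'rV[R]_n | A (toV r)].
have cB : compact B.
  have clB : closed B.
    move=> r clr; apply: (hcl _ (toV_inE r)) => eps heps.
    have hq : (0 < eps / (INR n + 1))%coqR by apply: Rdiv_lt_0_compat => //; have := pos_INR n; lra.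
    have [r' [Br' br']] := clr _ (nbhsx_ballx r _ (introT RltP hq)).
    by exists (toV r'); split => //; apply: edist_toV_lt.
  pose C := [set v : 'rV[R]_n | forall i, `[(- M), M]%classic (v ord0 i)].
  have cC : compact C.
    by apply: (@rV_compact _ _ (fun=> `[(- M), M]%classic)) => i; exact: segment_compact.
  apply: (subclosed_compact clB cC) => r Br i /=; rewrite in_itv /=.
  have := Rle_trans _ _ _ (Rabs_coord_le_vnorm n (toV r) i (elimT ltP (ltn_ord i))) (hM _ Br).
  by rewrite toV_lt => /Rabs_le_inv [hl hu]; apply/andP; split; apply/RleP.
pose f (i : {classic I}) := [set r : 'rV[R]_n | U i (toV r)].
move: cB; rewrite compact_cover => /(_ {classic I} setT f) [].
- move=> i _; rewrite openE => r hr; apply/nbhs_ballP.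
  have [eps [heps hU]] := hop i (toV r) hr.
  exists (eps / (INR n + 1))%coqR; first by apply/RltP; apply: Rdiv_lt_0_compat => //; have := pos_INR n; lra.
  by move=> r' br'; apply: (hU _ (toV_inE r')); apply: edist_toV_lt.
- by move=> r Br; have [i hi] := hcov _ Br; exists i.
move=> D _ hD; exists (finmap.enum_fset D) => x Ax.
have [i Di fi] := hD (\row_(k < n) x k) (eq_ind_r A Ax (toV_row n x (hin x Ax))).
exists i; split; last by move: fi; rewrite /f /= toV_row //; exact: hin.
exact: (@In_of_mem {classic I} _ _ Di).
Qed.
End HeineBorel.

Lemma compact_set_nested_cover n K (U : nat -> vec -> Prop) :
  compact_set n K -> (forall k, Defs.open_set n (U k)) ->
  (forall k k' x, (k <= k')%nat -> U k x -> U k' x) ->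
  (forall x, K x -> exists k, U k x) -> exists N, forall x, K x -> U N x.
Proof.
  intros [_ Hcover] Hopen Hmono Hcov.
  destruct (Hcover nat U Hopen Hcov) as [l Hl].
  exists (list_max l). intros x Kx. destruct (Hl x Kx) as [k [Hk Hx]].
  apply (Hmono k); [|exact Hx].
  exact (proj1 (Forall_forall _ l) (proj1 (list_max_le l _) (Nat.le_refl _)) k Hk).
Qed.

Lemma compact_set_coord0_bounded n K : compact_set (S n) K -> exists B, forall v, K v -> v 0%nat < B.
Proof.
  intros HK. destruct (compact_set_nested_cover (S n) K (fun k v => v 0%nat < INR k) HK) as [N HN].
  - intros k x Hx. cbv beta in Hx. exists (INR k - x 0%nat). split; [lra|]. intros y _ Hd.
    pose proof (Rabs_coord_le_edist (S n) y x 0 (Nat.lt_0_succ n)) as Hc.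
    rewrite edist_sym in Hc. pose proof (Rle_abs (y 0%nat - x 0%nat)). lra.
  - intros k k' x Hk Hx. cbv beta in *. apply le_INR in Hk. lra.
  - intros x _. destruct (INR_unbounded (x 0%nat)) as [N HN]. exists N. exact HN.
  - exists (INR N). exact HN.
Qed.

Lemma compact_set_separated n K v : compact_set n K -> inE n v -> ~ K v ->
  exists r, 0 < r /\ forall w, K w -> r <= edist n v w.
Proof.
  intros HK Hv HnK.
  destruct (compact_set_nested_cover n K (fun k w => / (INR k + 1) < edist n v w) HK) as [N HN].
  - intros k x Hx. cbv beta in *. exists (edist n v x - / (INR k + 1)). split; [lra|]. intros y _ Hd.
    pose proof (edist_triangle n v y x). rewrite (edist_sym n y x) in *. lra.
  - intros k k' x Hk Hx. cbv beta in *. apply le_INR in Hk. pose proof (pos_INR k).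
    eapply Rle_lt_trans; [|exact Hx]. apply Rinv_le_contravar; lra.
  - intros x Kx.
    assert (Hpos : 0 < edist n v x).
    { destruct (edist_nonneg n v x) as [|H0]; [assumption|].
      exfalso. apply HnK. rewrite (edist_eq0 n v x Hv (proj1 HK x Kx) (eq_sym H0)). exact Kx. }
    destruct (INR_unbounded (/ edist n v x)) as [N HN]. exists N.
    rewrite <- (Rinv_inv (edist n v x)). apply Rinv_lt_contravar; [|lra].
    apply Rmult_lt_0_compat; [apply Rinv_0_lt_compat, Hpos | pose proof (pos_INR N); lra].
  - exists (/ (INR N + 1)). split; [apply Rinv_0_lt_compat; pose proof (pos_INR N); lra|].
    intros w Kw. apply Rlt_le, HN, Kw.
Qed.

Section Properness.
Variables (m : nat) (Om : vec -> Prop) (rho : vec -> R) (G : vec -> vec) (sig : vec -> R).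
Hypothesis Hop : rel_open_sphere m Om.
Hypothesis HC1 : C1_grad m Om rho G.
Hypothesis Hcpl : complete_conformal m Om rho.
Hypothesis Hsig : forall x, Om x -> sig x = exp (- rho x).
Hypothesis Hsig_cont : forall x, closure m Om x -> forall eps, 0 < eps -> exists delta, 0 < delta /\
  forall y, closure m Om y -> edist (S m) y x < delta -> Rabs (sig y - sig x) < eps.

Lemma closure_point_in_domain x B :
  closure m Om x ->
  (forall eps, 0 < eps -> exists y, Om y /\ exp (rho y) < B /\ edist (S m) x y < eps) ->
  Om x.
Proof.
  intros Hcl Happ. apply NNPP. intros Hnx.
  pose proof (sig_nonpos_on_boundary m Om rho G Hop HC1 Hcpl sig Hsig Hsig_cont x Hcl Hnx) as Hsx.
  assert (HB : 0 < B).
  { destruct (Happ 1 Rlt_0_1) as [y [_ [Hy _]]]. pose proof (exp_pos (rho y)). lra. }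
  destruct (Hsig_cont x Hcl (/ B)) as [d [Hd Hnear]]; [apply Rinv_0_lt_compat, HB|].
  destruct (Happ d Hd) as [y [Hy [HyB Hxy]]].
  rewrite edist_sym in Hxy.
  specialize (Hnear y (domain_in_closure m Om Hop y Hy) Hxy).
  rewrite Hsig, exp_Ropp in Hnear by exact Hy. apply Rabs_def2 in Hnear.
  assert (/ B < / exp (rho y)) by (apply Rinv_lt_contravar; [apply Rmult_lt_0_compat; [apply exp_pos | exact HB] | exact HyB]).
  lra.
Qed.

Variable K : vec -> Prop.
Hypothesis HK : compact_set (S (S m)) K.

Lemma preimage_closed : euclid_closed (S m) (fun x => Om x /\ K (phi_map m rho G x)).
Proof.
  intros x Hx Happ.
  destruct (compact_set_coord0_bounded (S m) K HK) as [B HB].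
  assert (HOm : Om x).
  { apply (closure_point_in_domain x (2 * B)).
    - split; [exact Hx|]. intros eps He. destruct (Happ eps He) as [y [[Hy _] Hd]]. exists y. auto.
    - intros eps He. destruct (Happ eps He) as [y [[Hy HKy] Hd]]. exists y. repeat split; auto.
      pose proof (HB _ HKy). pose proof (phi_map_coord0_ge m rho G y). lra. }
  split; [exact HOm|]. apply NNPP. intros HnK.
  destruct (compact_set_separated _ K _ HK (phi_map_inE m rho G x) HnK) as [r [Hr Hsep]].
  destruct (phi_map_continuous m Om rho G HC1 x HOm r Hr) as [d [Hd Hcont]].
  destruct (Happ d Hd) as [y [[Hy HKy] Hxy]].
  rewrite edist_sym in Hxy. specialize (Hcont y Hy Hxy). specialize (Hsep _ HKy).
  rewrite edist_sym in Hsep. lra.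
Qed.

End Properness.

Theorem mainTheorem3 (m : nat) (Om : vec -> Prop) (rho : vec -> R) (G : vec -> vec) :
  sphere_domain m Om ->
  (exists x, sphere m x /\ ~ Om x) ->
  C1_grad m Om rho G ->
  complete_conformal m Om rho ->
  (exists sig : vec -> R,
     (forall x, Om x -> sig x = exp (- rho x)) /\
     (forall x, closure m Om x -> forall eps, 0 < eps -> exists delta, 0 < delta /\
        forall y, closure m Om y -> edist (S m) y x < delta -> Rabs (sig y - sig x) < eps)) ->
  proper_map m Om (phi_map m rho G).
Proof.
  intros [Hop _] _ HC1 Hcpl [sig [Hsig Hsig_cont]] K _ HK.
  apply HeineBorel.closed_bounded_compact.
  - intros x [Hx _]. apply (sphere_inE m x), (proj1 Hop x Hx).
  - exists 1. intros x [Hx _]. rewrite (proj2 (proj1 Hop x Hx)). lra.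
  - exact (preimage_closed m Om rho G sig Hop HC1 Hcpl Hsig Hsig_cont K HK).
Qed.
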